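(* Let $\mathcal I'$ be an instance whose $n$ data points (each in exactly one of $\ell$ groups) are located at a set $\mathcal C=\{c_1,\dots,c_k\}$ of locations in a metric space, and consider the exactly fair assignment problem on $\mathcal C$. Let $r$ be a $3$-approximately fair assignment of the data points to centers in $\mathcal C$ whose cost is at most the cost $\mathrm{OPT}_{\mathcal I'}$ of an optimal exactly fair assignment of $\mathcal I'$, and let $\mathcal I''$ be the instance obtained by moving each data point to the center it is assigned to by $r$. If there is a $\beta_k$-approximation algorithm for the exactly fair assignment problem on $\mathcal I''$, then there is a $(2\beta_k+1)$-approximation algorithm for the exactly fair assignment problem on $\mathcal I'$.
   Context: Let $X$ be the data points, $X_1,\dots,X_\ell$ the groups, $f$ the fairlet size (minimum size of a non-empty $S\subseteq X$ with $|S\cap X_j|=\frac{|X_j|}{|X|}|S|$ for all $j$) and $f_j$ the number of group-$j$ points in a fairlet, so $f_j/f=|X_j|/|X|$. An assignment maps each data point to a center in $\mathcal C$; its cost is the sum of distances from each point's location to its center. It is exactly fair if every cluster $S$ satisfies $|S\cap X_j|=\frac{f_j}{f}|S|$ for all $j$, and $\gamma$-approximately fair if every cluster $S$ satisfies $\bigl||S\cap X_j|-\frac{f_j}{f}|S|\bigr|\le\gamma$ for all $j$. A $\rho$-approximation algorithm returns an exactly fair assignment of cost at most $\rho$ times the optimum. *)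

From HB Require Import structures.
From mathcomp Require Import all_boot all_order all_algebra.
Set Implicit Arguments. Unset Strict Implicit. Unset Printing Implicit Defensive.
Import Order.TTheory GRing.Theory Num.Theory.
Local Open Scope ring_scope.

Definition is_metric (R : realFieldType) (P : Type) (d : P -> P -> R) : Prop :=
  [/\ forall x y, 0 <= d x y,
      forall x y, d x y = 0 <-> x = y,
      forall x y, d x y = d y x &
      forall x y z, d x z <= d x y + d y z].

Section Fair.
Variables (R : realFieldType) (P : Type) (d : P -> P -> R).
Variables (X : finType) (l k : nat) (grp : X -> 'I_l) (c : 'I_k -> P).

Definition group_set (j : 'I_l) : {set X} := [set x | grp x == j].

Definition cluster (s : X -> 'I_k) (i : 'I_k) : {set X} := [set x | s x == i].

Definition ratio (j : 'I_l) : R := #|group_set j|%:R / #|X|%:R.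

Definition exactly_fair (s : X -> 'I_k) : Prop :=
  forall i j, #|cluster s i :&: group_set j|%:R = ratio j * #|cluster s i|%:R.

Definition approx_fair (gamma : R) (s : X -> 'I_k) : Prop :=
  forall i j, `|#|cluster s i :&: group_set j|%:R - ratio j * #|cluster s i|%:R| <= gamma.

(* instance: location of point x is the center location c (loc x) *)
Definition cost (loc : X -> 'I_k) (s : X -> 'I_k) : R :=
  \sum_(x : X) d (c (loc x)) (c (s x)).

Definition cost_le_OPT (loc : X -> 'I_k) (s : X -> 'I_k) : Prop :=
  forall t : X -> 'I_k, exactly_fair t -> cost loc s <= cost loc t.

Definition rho_approx (rho : R) (loc : X -> 'I_k) (s : X -> 'I_k) : Prop :=
  exactly_fair s /\
  forall t : X -> 'I_k, exactly_fair t -> cost loc s <= rho * cost loc t.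
End Fair.

From mathcomp Require Import all_boot all_order all_algebra ring.
Import Order.TTheory GRing.Theory Num.Theory.
Local Open Scope ring_scope.

(* Only the triangle inequality is needed: moving every point from [loc x]
   to [r x] changes the cost of any assignment by at most [cost loc r] <= OPT,
   once in each direction, so an assignment that is beta-approximate for the
   moved instance costs at most OPT + beta (OPT + OPT) on the original one. *)

Section CostTriangle.
Context {R : realFieldType} {P : Type} {d : P -> P -> R}.
Context {X : finType} {k : nat} {c : 'I_k -> P}.
Hypothesis d_sym : forall x y, d x y = d y x.
Hypothesis d_triangle : forall x y z, d x z <= d x y + d y z.

Lemma cost_sym (a b : X -> 'I_k) : cost d c a b = cost d c b a.
Proof. by apply: eq_bigr => x _; rewrite d_sym. Qed.

Lemma cost_triangle (a b e : X -> 'I_k) :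
  cost d c a e <= cost d c a b + cost d c b e.
Proof. by rewrite /cost -big_split; apply: ler_sum => x _; apply: d_triangle. Qed.

Lemma cost_moved_le (loc r t : X -> 'I_k) :
  cost d c r t <= cost d c loc r + cost d c loc t.
Proof. by rewrite (cost_sym loc r); apply: cost_triangle. Qed.

End CostTriangle.

Theorem lemma2 (R : realFieldType) (P : Type) (d : P -> P -> R)
  (X : finType) (l k : nat) (grp : X -> 'I_l) (c : 'I_k -> P)
  (loc : X -> 'I_k) (r : X -> 'I_k) (beta : R) :
  is_metric d -> injective c -> 1 <= beta ->
  approx_fair grp (3 : R) r -> cost_le_OPT d grp c loc r ->
  forall s : X -> 'I_k, rho_approx d grp c beta r s ->
    rho_approx d grp c (2 * beta + 1) loc s.
Proof.
move=> [_ _ d_sym d_triangle] _ beta_ge1 _ r_le_opt s [s_fair s_approx].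
split=> // t t_fair.
have beta_ge0 : 0 <= beta by apply: le_trans beta_ge1.
have r_le_t := r_le_opt t t_fair.
have s_on_r : cost d c r s <= beta * (cost d c loc t + cost d c loc t).
  apply: le_trans (s_approx t t_fair) _; rewrite ler_wpM2l //.
  apply: le_trans (cost_moved_le d_sym d_triangle loc r t) _.
  by rewrite lerD2r.
apply: le_trans (cost_triangle d_triangle loc r s) _.
have -> : (2 * beta + 1) * cost d c loc t
          = cost d c loc t + beta * (cost d c loc t + cost d c loc t).
  by ring.
exact: lerD.
Qed.
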